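(* For all natural numbers $n\geq 1$, \[a_4(n)=4p(n)-p(n+1)-2p(n+2)-2p(n+3)+p(n+4)+2p(n+5)-p(n+6).\]
   Context: $p(n)$ denotes the number of partitions of $n$. $a_4(n)$ denotes the number of partitions of $n$ in which the smallest part occurs at least $4$ times. *)

From mathcomp Require Import all_boot all_order all_algebra.
Set Implicit Arguments. Unset Strict Implicit. Unset Printing Implicit Defensive.

(* A partition of n is represented by its parts padded with zeros to length n:
   a nonincreasing n-tuple (l_1 >= ... >= l_n >= 0) of naturals (each <= n)
   summing to n.  The parts of the partition are the nonzero entries. *)
Definition is_partition (n : nat) (t : n.-tuple 'I_n.+1) : bool :=
  sorted (fun x y : nat => y <= x) (map (@nat_of_ord _) t)
  && (sumn (map (@nat_of_ord _) t) == n).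

Definition parts (n : nat) (t : n.-tuple 'I_n.+1) : seq nat :=
  [seq x <- map (@nat_of_ord _) t | 0 < x].

(* the smallest part (meaningful when the partition is nonempty, i.e. n >= 1) *)
Definition smallest_part (s : seq nat) : nat := foldr minn (head 0 s) s.

Definition p (n : nat) : nat := #|[pred t : n.-tuple 'I_n.+1 | is_partition t]|.

Definition a4 (n : nat) : nat :=
  #|[pred t : n.-tuple 'I_n.+1 | is_partition t &&
      (4 <= count_mem (smallest_part (parts t)) (parts t))]|.

From mathcomp Require Import all_boot all_order all_algebra.
From mathcomp Require Import zify.

(* Write a_k(n) for the number of partitions of n whose smallest part occurs at
   least k times, and p_i(N) for the number of partitions of N into parts >= i.
   Classifying by the smallest part i, a_k(n) = sum_i p_i(n - k i).  As the part
   i occurs or not, p_i(N) = p_i(N - i) + p_(i+1)(N), and substituting this into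
   the sum gives a_k(n) + p(n) = a_k(n + k) + a_(k+1)(n).  Starting from
   a_1(n) = p(n), three applications of this recurrence express a_4 through p. *)

(* Partitions of [N] into parts [>= m], each listed in nondecreasing order;
   [f] is fuel. *)
Fixpoint ptns_fuel (f m N : nat) : seq (seq nat) :=
  if f is f'.+1 then
    if N == 0 then [:: [::]]
    else flatten [seq map (cons i) (ptns_fuel f' i (N - i)) | i <- iota m (N.+1 - m)]
  else [::].

Definition ptns_ge (m N : nat) : seq (seq nat) := ptns_fuel N.+1 m N.

Definition nptns_ge (m N : nat) : nat := size (ptns_ge m N).

Lemma ptns_fuel_enough f g m N :
  0 < m -> N < f -> N < g -> ptns_fuel f m N = ptns_fuel g m N.
Proof.
elim: f g m N => [|f IH] [|g] m N //= m_gt0 ltNf ltNg.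
case: eqP => // N_neq0; congr flatten; apply/eq_in_map => i.
by rewrite mem_iota => /andP[le_mi _]; rewrite (IH g) //; lia.
Qed.

Lemma ptns_ge0 m : ptns_ge m 0 = [:: [::]].
Proof. by []. Qed.

Lemma ptns_geS m N : 0 < m -> 0 < N ->
  ptns_ge m N = flatten [seq map (cons i) (ptns_ge i (N - i)) | i <- iota m (N.+1 - m)].
Proof.
move=> m_gt0 N_gt0; rewrite /ptns_ge /=; case: eqP => [|_]; first lia.
congr flatten; apply/eq_in_map => i; rewrite mem_iota => /andP[le_mi _].
by rewrite (@ptns_fuel_enough _ (N - i).+1) //; lia.
Qed.

Lemma ptns_ge_small m N : 0 < N < m -> ptns_ge m N = [::].
Proof.
case/andP=> N_gt0 ltNm; rewrite ptns_geS //; last lia.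
by have -> : N.+1 - m = 0 by lia.
Qed.

Lemma ptns_ge_rec m N : 0 < m <= N ->
  ptns_ge m N = map (cons m) (ptns_ge m (N - m)) ++ ptns_ge m.+1 N.
Proof.
case/andP=> m_gt0 le_mN; have N_gt0 : 0 < N by lia.
rewrite (@ptns_geS m) // (@ptns_geS m.+1) //.
by have -> : N.+1 - m = (N - m).+1 by lia.
Qed.

Lemma ptns_ge_ind (P : nat -> nat -> Prop) :
  (forall m, 0 < m -> P m 0) ->
  (forall m N, 0 < N < m -> P m N) ->
  (forall m N, 0 < m <= N -> P m (N - m) -> P m.+1 N -> P m N) ->
  forall m N, 0 < m -> P m N.
Proof.
move=> P0 P_small P_rec m N; elim/ltn_ind: N m => N IHN m m_gt0.
case: (posnP N) => [->|N_gt0]; first exact: P0.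
have [d ltNmd] : exists d, N < m + d by exists N.+1; lia.
elim: d m m_gt0 ltNmd => [|d IHd] m m_gt0 ltNmd; first by apply: P_small; lia.
case: (leqP m N) => [le_mN|ltNm]; last by apply: P_small; lia.
by apply: P_rec; [lia | apply: IHN; lia | apply: IHd; lia].
Qed.

Lemma mem_ptns_ge m N s : 0 < m ->
  (s \in ptns_ge m N) = path leq m s && (sumn s == N).
Proof.
move=> m_gt0; move: m N m_gt0 s; apply: ptns_ge_ind
  => [m m_gt0|m N /andP[N_gt0 ltNm]|m N le_mN IH1 IH2] s.
- rewrite ptns_ge0 inE; case: s => //= x s; apply/esym/andP => -[/andP[le_mx _] /eqP]; lia.
- rewrite ptns_ge_small ?N_gt0 //; apply/esym/andP.
  by case: s => [[_ /eqP]|x s [/andP[le_mx _] /eqP]] /=; lia.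
- have N_gt0 : 0 < N by lia.
  rewrite ptns_ge_rec // mem_cat IH2; case: s => [|x s] /=.
    have -> : (0 == N) = false by lia.
    by rewrite orbF; apply/negbTE/mapP => -[].
  have -> : (x :: s \in map (cons m) (ptns_ge m (N - m))) =
            (x == m) && (s \in ptns_ge m (N - m)).
    by apply/mapP/andP => [[s' ? [-> ->]]|[/eqP -> ?]]; [split | exists s].
  rewrite IH1; case: ltngtP => [_|_|<-] //=; rewrite ?andbF //.
  by rewrite orbF; congr (_ && _); apply/eqP/eqP; lia.
Qed.

Lemma uniq_ptns_ge m N : 0 < m -> uniq (ptns_ge m N).
Proof.
move: m N; apply: ptns_ge_ind => [m _|m N lt0Nm|m N le_mN IH1 IH2]; first by [].
  by rewrite ptns_ge_small.
rewrite ptns_ge_rec // cat_uniq map_inj_uniq ?IH1 ?IH2 ?andbT //=; last by move=> ? ? [].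
apply/hasPn => s; rewrite mem_ptns_ge; last lia.
by case/andP=> /= mins _; apply/mapP => -[s' _ eq_s]; move: mins; rewrite eq_s /= ltnn.
Qed.

Lemma nptns_ge_rec m N : 0 < m ->
  nptns_ge m N = nptns_ge m.+1 N + (if m <= N then nptns_ge m (N - m) else 0).
Proof.
move=> m_gt0; rewrite /nptns_ge; case: leqP => [le_mN|ltNm].
  by rewrite ptns_ge_rec ?m_gt0 // size_cat size_map addnC.
case: (posnP N) => [->|N_gt0]; first by [].
by rewrite !ptns_ge_small ?N_gt0 //; lia.
Qed.

Lemma count_ptns_ge_mult m N j : 0 < m ->
  count (fun s => j <= count_mem m s) (ptns_ge m N) =
  if j * m <= N then nptns_ge m (N - j * m) else 0.
Proof.
move=> m_gt0; move: m N m_gt0 j; apply: ptns_ge_ind => [m m_gt0|m N lt0Nm|m N le_mN IH _] [|j].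
- by [].
- by rewrite ptns_ge0 /= ifN //; lia.
- by rewrite mul0n subn0 leq0n /nptns_ge count_predT.
- by rewrite ptns_ge_small // ifN //; lia.
- by rewrite mul0n subn0 leq0n /nptns_ge count_predT.
rewrite ptns_ge_rec // count_cat count_map.
have -> : count (preim (cons m) (fun s => j < count_mem m s)) (ptns_ge m (N - m)) =
          count (fun s => j <= count_mem m s) (ptns_ge m (N - m)).
  by apply: eq_count => s; rewrite /= eqxx.
rewrite IH (eq_in_count (a2 := pred0)) ?count_pred0 ?addn0; last first.
  move=> s; rewrite mem_ptns_ge; last lia.
  case/andP=> /(order_path_min leq_trans)/allP gt_m _.
  by rewrite (count_memPn _) //; apply/negP => /gt_m; rewrite ltnn.
rewrite mulSn subnDA; congr (if _ then _ else _); apply/idP/idP; lia.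
Qed.

Lemma count_ptns_ge_head_mult m N k M : 0 < m -> 0 < k -> N < M ->
  count (fun s => k <= count_mem (head 0 s) s) (ptns_ge m N) =
  \sum_(m <= i < M) (if k * i <= N then nptns_ge i (N - k * i) else 0).
Proof.
move=> m_gt0 k_gt0; move: m N m_gt0 M.
have sum0 m N M : N < m ->
    \sum_(m <= i < M) (if k * i <= N then nptns_ge i (N - k * i) else 0) = 0.
  move=> ltNm; rewrite big_nat_cond big1 // => i /andP[/andP[le_mi _] _].
  by rewrite ifN //; nia.
apply: ptns_ge_ind => [m m_gt0|m N lt0Nm|m N le_mN _ IH] M ltNM.
- by rewrite ptns_ge0 sum0 //= leqNgt k_gt0.
- by rewrite ptns_ge_small // sum0 //; lia.
have lt_mM : m < M by lia.
rewrite ptns_ge_rec // count_cat count_map (IH M) // (big_ltn lt_mM).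
congr (_ + _).
have -> : count (preim (cons m) (fun s => k <= count_mem (head 0 s) s)) (ptns_ge m (N - m)) =
          count (fun s => k.-1 <= count_mem m s) (ptns_ge m (N - m)).
  by apply: eq_count => s; rewrite /= eqxx; lia.
rewrite count_ptns_ge_mult; last lia.
have -> : k = k.-1.+1 by lia.
rewrite mulSn subnDA; congr (if _ then _ else _); apply/idP/idP; lia.
Qed.

Lemma sumn_filter_gt0 s : sumn [seq x <- s | 0 < x] = sumn s.
Proof. by elim: s => //= -[|x] s IH /=; rewrite IH. Qed.

Lemma sorted_geq_filter_gt0 s : sorted geq s ->
  s = [seq x <- s | 0 < x] ++ nseq (size s - size [seq x <- s | 0 < x]) 0.
Proof.
elim: s => //= -[|x] s IH s_sorted /=.
  have /all_pred1P -> : all (pred1 0) s.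
    move: s_sorted; rewrite (path_sortedE (rev_trans leq_trans)) => /andP[s_le0 _].
    by apply: sub_all s_le0 => y; rewrite /= leqn0.
  by rewrite filter_nseq /= size_nseq.
by congr cons; rewrite {1}(IH (path_sorted s_sorted)) subSS.
Qed.

Lemma path_geq_nseq0 x k : path geq x (nseq k 0).
Proof. by elim: k x => //= k IH x; rewrite IH. Qed.

Lemma sorted_geq_cat_nseq0 s k : sorted geq s -> sorted geq (s ++ nseq k 0).
Proof.
case: s => [_|x s]; first by case: k => //= k; apply: path_geq_nseq0.
by rewrite /= cat_path path_geq_nseq0 andbT.
Qed.

Lemma foldr_minn_min x y s : x \in s -> all (leq x) s -> x <= y -> foldr minn y s = x.
Proof.
move=> xs /allP le_x le_xy; apply/eqP; rewrite eqn_leq; apply/andP; split.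
  elim: s {le_x} xs => //= z s IH; rewrite inE => /predU1P[<-|/IH]; first exact: geq_minl.
  exact: leq_trans (geq_minr _ _).
elim: s {xs} le_x => //= z s IH le_x; rewrite leq_min le_x ?mem_head // IH // => w ws.
by rewrite le_x // inE ws orbT.
Qed.

Lemma smallest_partE x s : x \in s -> all (leq x) s -> smallest_part s = x.
Proof.
move=> xs le_x; apply: foldr_minn_min => //.
by case: s xs le_x => //= y s _ /andP[].
Qed.

Section PaddedPartitions.

Variable n : nat.
Implicit Types t : n.-tuple 'I_n.+1.

Lemma parts_inj t1 t2 :
  is_partition t1 -> is_partition t2 -> parts t1 = parts t2 -> t1 = t2.
Proof.
move=> /andP[t1_sorted _] /andP[t2_sorted _] eq_parts; apply/val_inj/(inj_map val_inj).
rewrite (sorted_geq_filter_gt0 _ t1_sorted) (sorted_geq_filter_gt0 _ t2_sorted).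
by move: eq_parts; rewrite /parts !size_map !size_tuple => ->.
Qed.

Lemma rev_parts_ptns_ge t : is_partition t -> rev (parts t) \in ptns_ge 1 n.
Proof.
case/andP=> t_sorted /eqP t_sum; rewrite mem_ptns_ge // (path_sortedE leq_trans).
rewrite all_rev rev_sorted sumn_rev sumn_filter_gt0 t_sum eqxx filter_all andbT /=.
rewrite /parts; apply: sorted_filter t_sorted; exact: rev_trans leq_trans.
Qed.

Lemma ptns_ge_rev_parts s :
  s \in ptns_ge 1 n -> exists2 t : n.-tuple 'I_n.+1, is_partition t & rev (parts t) = s.
Proof.
rewrite mem_ptns_ge // (path_sortedE leq_trans) => /andP[/andP[s_gt0 s_sorted] /eqP s_sum].
have le_n x : x \in s -> x <= n.
  by move=> xs; rewrite -s_sum (perm_sumn (perm_to_rem xs)) leq_addr.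
have size_s : size s <= n.
  by rewrite -s_sum sumnE -sum1_size !big_seq; apply: leq_sum => i /(allP s_gt0).
pose r := rev s ++ nseq (n - size s) 0.
have size_r : size (map inord r : seq 'I_n.+1) == n.
  by rewrite size_map size_cat size_rev size_nseq subnKC.
have val_r : map val (Tuple size_r) = r.
  rewrite /= -map_comp map_id_in // => x.
  by rewrite mem_cat mem_rev => /orP[/le_n le_xn|/nseqP[-> _]]; rewrite /= inordK.
exists (Tuple size_r).
  rewrite /is_partition val_r sumn_cat sumn_rev sumn_nseq s_sum addn0 eqxx andbT.
  by apply: sorted_geq_cat_nseq0; rewrite rev_sorted.
by rewrite /parts val_r filter_cat filter_nseq /= cats0 (all_filterP _) ?revK // all_rev.
Qed.

Lemma card_partitions (P : pred (seq nat)) :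
  #|[pred t : n.-tuple 'I_n.+1 | is_partition t && P (rev (parts t))]| =
  count P (ptns_ge 1 n).
Proof.
rewrite cardE -(size_map (fun t => rev (parts t))) -size_filter.
apply/perm_size/uniq_perm; first rewrite map_inj_in_uniq ?enum_uniq //.
- move=> t1 t2; rewrite !mem_enum !inE => /andP[t1_ptn _] /andP[t2_ptn _].
  by move/(can_inj revK); apply: parts_inj.
- by rewrite filter_uniq // uniq_ptns_ge.
move=> s; rewrite mem_filter; apply/mapP/idP => [[t]|/andP[Ps /ptns_ge_rev_parts[t t_ptn eq_s]]].
  by rewrite mem_enum inE => /andP[t_ptn Pt] ->; rewrite Pt rev_parts_ptns_ge.
by exists t; rewrite // mem_enum inE t_ptn eq_s.
Qed.

Lemma smallest_part_parts t : 0 < n -> is_partition t ->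
  smallest_part (parts t) = head 0 (rev (parts t)).
Proof.
move=> n_gt0 /rev_parts_ptns_ge; rewrite mem_ptns_ge // -{3}[parts t]revK.
case: (rev (parts t)) => [|x u] /andP[/= u_path /eqP u_sum]; first lia.
case/andP: u_path => _ x_u.
apply: smallest_partE; first by rewrite mem_rev mem_head.
by rewrite all_rev /= leqnn (order_path_min leq_trans).
Qed.

End PaddedPartitions.

Lemma p_nptns_ge n : p n = nptns_ge 1 n.
Proof.
rewrite /nptns_ge -(count_predT (ptns_ge 1 n)) -card_partitions.
by apply: eq_card => t; rewrite !inE andbT.
Qed.

(* The paper's a_k(n): the head of a nondecreasing list is its smallest part. *)
Definition ak (k n : nat) : nat :=
  count (fun s => k <= count_mem (head 0 s) s) (ptns_ge 1 n).

Lemma ak_rec k n : ak k.+1 n + p n = ak k.+1 (n + k.+1) + ak k.+2 n.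
Proof.
pose M := n + k.+2; rewrite /ak p_nptns_ge.
rewrite (@count_ptns_ge_head_mult _ (n + k.+1) _ M.+1) //; last lia.
rewrite !(@count_ptns_ge_head_mult _ n _ M) //; try lia.
rewrite big_nat_recl; last lia.
rewrite muln1 addnK leq_addl -addnA addnC -big_split; congr (_ + _).
apply: eq_big_nat => i /andP[i_gt0 _] /=.
rewrite (@nptns_ge_rec i) //.
case: (leqP (k.+1 * i) n) => [le_n|lt_n]; last by rewrite !ifN //; nia.
have -> : k.+1 * i.+1 <= n + k.+1 by nia.
have -> : n + k.+1 - k.+1 * i.+1 = n - k.+1 * i by nia.
congr (_ + _); have -> : (i <= n - k.+1 * i) = (k.+2 * i <= n) by apply/idP/idP; nia.
by case: ifP => // _; congr nptns_ge; nia.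
Qed.

Lemma ak1 n : 0 < n -> ak 1 n = p n.
Proof.
move=> n_gt0; rewrite /ak p_nptns_ge /nptns_ge -count_predT; apply: eq_in_count => s.
by rewrite mem_ptns_ge // => /andP[_]; case: s => [/eqP|x s _] /=; [lia | rewrite eqxx].
Qed.

Lemma a4_ak n : 0 < n -> a4 n = ak 4 n.
Proof.
move=> n_gt0; rewrite /ak -card_partitions; apply: eq_card => t; rewrite !inE.
by case t_ptn: (is_partition t) => //=; rewrite smallest_part_parts // count_rev.
Qed.

Local Open Scope ring_scope.

Lemma akSS k n : (ak k.+2 n)%:Z = (ak k.+1 n)%:Z + (p n)%:Z - (ak k.+1 (n + k.+1))%:Z.
Proof. by have := ak_rec k n; lia. Qed.

Theorem theorem1p5 (n : nat) (hn : (1 <= n)%N) :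
  (a4 n)%:Z = 4 * (p n)%:Z - (p (n + 1)%N)%:Z - 2 * (p (n + 2)%N)%:Z - 2 * (p (n + 3)%N)%:Z
              + (p (n + 4)%N)%:Z + 2 * (p (n + 5)%N)%:Z - (p (n + 6)%N)%:Z.
Proof.
have a2 m : (0 < m)%N -> (ak 2 m)%:Z = 2 * (p m)%:Z - (p m.+1)%:Z.
  by move=> m_gt0; rewrite akSS !ak1 ?addn1 //; lia.
have a3 m : (0 < m)%N ->
    (ak 3 m)%:Z = 3 * (p m)%:Z - (p m.+1)%:Z - 2 * (p m.+2)%:Z + (p m.+3)%:Z.
  by move=> m_gt0; rewrite akSS !a2 ?addnS ?addn0 //; lia.
by rewrite a4_ak // akSS !a3 ?addnS ?addn0 //; lia.
Qed.
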